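(* Let $\nu\in\mathbb M$ and $\theta_k=\theta_k[\nu]$. Then for all $k\ge0$, $$\mathbb S^{2^k}\theta_k=\theta_k,\qquad \theta_k=\tfrac12\bigl(\theta_{k+1}+\mathbb S^{2^k}\theta_{k+1}\bigr),$$ and the sequence $(\theta_k[\nu])_{k\ge0}$ uniquely determines the whole family $\mathcal P_{r,k}[\nu]$ and the measure $\nu$. Conversely, if a sequence $(\theta_k)_{k\ge0}$ of Borel probability measures on $I^{\mathbb Z}$ satisfies these two relations for all $k\ge0$, then there is a unique $\nu\in\mathbb M$ with $\theta_k[\nu]=\theta_k$ for all $k\ge0$.
   Context: $I=\{0,1\}$. $\mathbb S$ is the left shift on $I^{\mathbb Z}$, $(\mathbb Sw)(j)=w(j+1)$; for a measure $\eta$, $\mathbb S^j\eta$ denotes the pushforward $\eta\circ\mathbb S^{-j}$. $I^{\mathbb N}$ is the space of $0$–$1$ sequences $(\alpha_i)_{i\ge1}$ with uniform Bernoulli measure $m$, and $\mathbb O$ is the odometer: if $\alpha_1=\dots=\alpha_{n-1}=1$, $\alpha_n=0$ then $\mathbb O[\alpha]_i=0$ ($i<n$), $\mathbb O[\alpha]_n=1$, $\mathbb O[\alpha]_i=\alpha_i$ ($i>n$). $\mathbb M$ is the set of Borel probability measures on $I^{\mathbb Z}\times I^{\mathbb N}$ invariant under $\mathbb S\times\mathbb O$. For $k\ge0$, $0\le r\le 2^k-1$, $A_{r,k}=\{\alpha:\sum_{i=1}^k\alpha_i2^{i-1}=r\}$; $\mathcal P_{r,k}[\nu]$ is the normalized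 projection to $I^{\mathbb Z}$ of the restriction of $\nu$ to $I^{\mathbb Z}\times A_{r,k}$, and $\theta_k[\nu]=\mathcal P_{0,k}[\nu]$ (so $\theta_0[\nu]$ is the projection of $\nu$ to $I^{\mathbb Z}$). *)

From Stdlib Require Import Reals ZArith Arith List.
Open Scope R_scope.

Definition bseqZ := Z -> bool.
(* I^N : index n : nat encodes alpha_{n+1} *)
Definition bseqN := nat -> bool.
Definition XProd := (bseqZ * bseqN)%type.

Inductive measurable {X : Type} (gen : (X -> Prop) -> Prop) : (X -> Prop) -> Prop :=
| meas_gen : forall A, gen A -> measurable gen A
| meas_full : measurable gen (fun _ => True)
| meas_compl : forall A, measurable gen A -> measurable gen (fun x => ~ A x)
| meas_union : forall A : nat -> X -> Prop,
    (forall n, measurable gen (A n)) -> measurable gen (fun x => exists n, A n x).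

(* Cylinder generators: the generated sigma-algebra is the product (= Borel)
   sigma-algebra of these Cantor spaces. *)
Definition genZ (A : bseqZ -> Prop) : Prop :=
  exists (z : Z) (b : bool), forall w, A w <-> w z = b.
Definition genProd (A : XProd -> Prop) : Prop :=
  (exists (z : Z) (b : bool), forall p, A p <-> fst p z = b) \/
  (exists (i : nat) (b : bool), forall p, A p <-> snd p i = b).

Definition BorelZ := measurable genZ.
Definition BorelProd := measurable genProd.

Definition is_prob_measure {X : Type} (gen : (X -> Prop) -> Prop)
  (mu : (X -> Prop) -> R) : Prop :=
  (forall A, measurable gen A -> 0 <= mu A) /\
  mu (fun _ => True) = 1 /\
  (forall A : nat -> X -> Prop,
     (forall n, measurable gen (A n)) ->
     (forall n m x, n <> m -> A n x -> A m x -> False) ->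
     infinite_sum (fun n => mu (A n)) (mu (fun x => exists n, A n x))).

Definition meas_eq {X : Type} (gen : (X -> Prop) -> Prop)
  (mu1 mu2 : (X -> Prop) -> R) : Prop :=
  forall A, measurable gen A -> mu1 A = mu2 A.

Definition shiftn (n : nat) (w : bseqZ) : bseqZ := fun j => w (j + Z.of_nat n)%Z.
Definition shift : bseqZ -> bseqZ := shiftn 1.

(* odometer: flip all leading 1's to 0 and the first 0 to 1
   (the all-ones sequence is sent to all zeros) *)
Definition odometer (a : bseqN) : bseqN :=
  fun i => if forallb a (seq 0 i) then negb (a i) else a i.

Definition pushforward {X Y : Type} (f : X -> Y) (mu : (X -> Prop) -> R)
  : (Y -> Prop) -> R := fun A => mu (fun x => A (f x)).

(* S^j eta = eta o S^{-j} *)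
Definition shift_meas (n : nat) (eta : (bseqZ -> Prop) -> R) : (bseqZ -> Prop) -> R :=
  pushforward (shiftn n) eta.

Definition SxO (p : XProd) : XProd := (shift (fst p), odometer (snd p)).

Definition inM (nu : (XProd -> Prop) -> R) : Prop :=
  is_prob_measure genProd nu /\ meas_eq genProd (pushforward SxO nu) nu.

Fixpoint bin_val (a : bseqN) (k : nat) : nat :=
  match k with
  | O => 0%nat
  | S k' => (bin_val a k' + (if a k' then 2 ^ k' else 0))%nat
  end.

Definition A_rk (r k : nat) (a : bseqN) : Prop := bin_val a k = r.

Definition P_rk (r k : nat) (nu : (XProd -> Prop) -> R) : (bseqZ -> Prop) -> R :=
  fun B => nu (fun p => B (fst p) /\ A_rk r k (snd p))
           / nu (fun p => A_rk r k (snd p)).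

Definition theta (k : nat) (nu : (XProd -> Prop) -> R) : (bseqZ -> Prop) -> R :=
  P_rk 0 k nu.

Definition theta_relations (th : nat -> (bseqZ -> Prop) -> R) : Prop :=
  forall k : nat,
    meas_eq genZ (shift_meas (2 ^ k) (th k)) (th k) /\
    meas_eq genZ (th k)
      (fun B => / 2 * (th (S k) B + shift_meas (2 ^ k) (th (S k)) B)).

From Pilot Require Import Defs.
From Stdlib Require Import Reals ZArith Arith List Lia Lra.
From Stdlib Require Import Classical ClassicalEpsilon FunctionalExtensionality PropExtensionality.
Open Scope R_scope.

(** Under [S x O] the odometer adds one to the residue
    [bin_val alpha k] modulo [2^k], so invariance of [nu] gives
    [nu (B x A_{r,k}) = nu (S^-r B x A_{0,k})]: all [2^k] cylinders [A_{r,k}]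
    have mass [2^-k] and [P_{r,k} = S^r theta_k].  The two relations follow
    from [A_{0,k} = A_{0,k+1} + A_{2^k,k+1}].  Rectangles [B x A_{r,k}] form a
    pi-system generating the product sigma-algebra, so the [theta_k] determine
    [nu].  Conversely, a set [E] depending on finitely many coordinates gets
    the mass [2^-N sum_{r < 2^N} theta_N (S^-r E_r)] ([E_r] its section at a
    sequence starting with the binary digits of [r]), independent of [N] by the
    second relation; this premeasure is sigma-additive on the cylinder algebra
    by compactness of the Cantor space, so Caratheodory extends it, and the
    first relation makes the extension [S x O]-invariant. *)

Lemma pred_ext {X : Type} (A B : X -> Prop) : (forall x, A x <-> B x) -> A = B.
Proof.
  intros H; apply functional_extensionality; intro x.
  apply propositional_extensionality; auto.
Qed.

Definition disjoint_family {X : Type} (F : nat -> X -> Prop) : Prop :=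
  forall n m x, n <> m -> F n x -> F m x -> False.

Lemma exists_lt_S {X : Type} (F : nat -> X -> Prop) n :
  (fun x => exists i, (i < S n)%nat /\ F i x) =
  (fun x => (exists i, (i < n)%nat /\ F i x) \/ F n x).
Proof.
  apply pred_ext; intro x; split.
  - intros [i [Hi Hx]]. destruct (Nat.eq_dec i n) as [->|ne]; auto.
    left; exists i; split; [lia|auto].
  - intros [[i [Hi Hx]]|Hx]; [exists i | exists n]; split; auto; lia.
Qed.

Lemma exists_lt_0 {X : Type} (F : nat -> X -> Prop) :
  (fun x => exists i, (i < 0)%nat /\ F i x) = (fun _ => False).
Proof. apply pred_ext; intro x; split; [intros [i [Hi _]]; lia | tauto]. Qed.

Section Measurable.
Context {X : Type} (gen : (X -> Prop) -> Prop).

Lemma measurable_empty : measurable gen (fun _ => False).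
Proof.
  replace (fun _ : X => False) with (fun x : X => ~ (fun _ => True) x).
  - apply meas_compl, meas_full.
  - apply pred_ext; intuition.
Qed.

Lemma measurable_or A B :
  measurable gen A -> measurable gen B -> measurable gen (fun x => A x \/ B x).
Proof.
  intros HA HB.
  replace (fun x => A x \/ B x)
    with (fun x => exists n, (fun n : nat => match n with O => A | _ => B end) n x).
  - apply meas_union. intros [|n]; auto.
  - apply pred_ext; intro x; split.
    + intros [[|n] H]; auto.
    + intros [H|H]; [exists O|exists 1%nat]; auto.
Qed.

Lemma measurable_and A B :
  measurable gen A -> measurable gen B -> measurable gen (fun x => A x /\ B x).
Proof.
  intros HA HB.
  replace (fun x => A x /\ B x) with (fun x => ~ (~ A x \/ ~ B x)).
  - apply meas_compl, measurable_or; apply meas_compl; auto.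
  - apply pred_ext; intro x; split.
    + intro H; split; apply NNPP; intro; apply H; auto.
    + intros [H1 H2] [H|H]; auto.
Qed.

Lemma measurable_const (P : Prop) : measurable gen (fun _ => P).
Proof.
  destruct (classic P) as [H|H].
  - replace (fun _ : X => P) with (fun _ : X => True) by (apply pred_ext; intuition).
    apply meas_full.
  - replace (fun _ : X => P) with (fun _ : X => False) by (apply pred_ext; intuition).
    apply measurable_empty.
Qed.

End Measurable.

Lemma measurable_sub_gen {X : Type} (g1 g2 : (X -> Prop) -> Prop) A :
  (forall G, g1 G -> measurable g2 G) -> measurable g1 A -> measurable g2 A.
Proof.
  intros H HA; induction HA.
  - auto.
  - apply meas_full.
  - apply meas_compl; auto.
  - apply meas_union; auto.
Qed.

Fixpoint fsum (f : nat -> R) (n : nat) : R :=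
  match n with O => 0 | S n => fsum f n + f n end.

Lemma sum_f_R0_fsum f n : sum_f_R0 f n = fsum f (S n).
Proof. induction n; simpl; [lra|]. rewrite IHn; simpl; lra. Qed.

Lemma fsum_ext f g n : (forall i, (i < n)%nat -> f i = g i) -> fsum f n = fsum g n.
Proof. induction n; simpl; intros; auto. rewrite IHn, H; auto. Qed.

Lemma fsum_plus f g n : fsum (fun i => f i + g i) n = fsum f n + fsum g n.
Proof. induction n; simpl; lra. Qed.

Lemma fsum_split f a b : fsum f (a + b) = fsum f a + fsum (fun i => f (a + i)%nat) b.
Proof.
  induction b; simpl.
  - rewrite Nat.add_0_r; lra.
  - rewrite Nat.add_succ_r; simpl; rewrite IHb; lra.
Qed.

Lemma fsum_const c n : fsum (fun _ => c) n = INR n * c.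
Proof. induction n; simpl fsum; [simpl; lra|]. rewrite IHn, S_INR; lra. Qed.

Lemma fsum_single f n r : (r < n)%nat ->
  (forall i, (i < n)%nat -> i <> r -> f i = 0) -> fsum f n = f r.
Proof.
  induction n; intros Hr H; [lia|]. simpl.
  destruct (Nat.eq_dec r n) as [->|ne].
  - rewrite (fsum_ext _ (fun _ => 0)), fsum_const by (intros; apply H; lia). lra.
  - rewrite IHn, (H n) by (auto; lia). lra.
Qed.

Lemma fsum_nonneg f n : (forall i, (i < n)%nat -> 0 <= f i) -> 0 <= fsum f n.
Proof.
  induction n; simpl; intros H; [lra|].
  assert (0 <= f n) by auto. assert (0 <= fsum f n) by auto. lra.
Qed.

Lemma infinite_sum_eventually_0 (f : nat -> R) M :
  (forall n, (n >= M)%nat -> f n = 0) -> infinite_sum f (fsum f M).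
Proof.
  intros H eps Heps. exists M. intros n Hn.
  assert (E : forall k, sum_f_R0 f (M + k) = fsum f M).
  { induction k.
    - rewrite Nat.add_0_r, sum_f_R0_fsum. simpl. rewrite (H M) by lia. lra.
    - rewrite Nat.add_succ_r. simpl. rewrite IHk, (H (S (M + k))) by lia. lra. }
  replace n with (M + (n - M))%nat by lia.
  rewrite E. unfold Rdist. rewrite Rminus_diag, Rabs_R0. lra.
Qed.

Lemma infinite_sum_scal (f : nat -> R) l c :
  infinite_sum f l -> infinite_sum (fun n => c * f n) (c * l).
Proof.
  intro H. apply (Un_cv_ext (fun n => c * sum_f_R0 f n)).
  - intro n. rewrite scal_sum. apply sum_eq. intros; ring.
  - apply (CV_mult (fun _ => c)); [|exact H].
    intros eps He. exists 0%nat. intros. unfold Rdist. rewrite Rminus_diag, Rabs_R0. lra.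
Qed.

Definition countably_additive {X : Type} (gen : (X -> Prop) -> Prop)
  (mu : (X -> Prop) -> R) : Prop :=
  (forall A, measurable gen A -> 0 <= mu A) /\
  (forall F : nat -> X -> Prop, (forall n, measurable gen (F n)) -> disjoint_family F ->
     infinite_sum (fun n => mu (F n)) (mu (fun x => exists n, F n x))).

Lemma prob_countably_additive {X : Type} gen (mu : (X -> Prop) -> R) :
  is_prob_measure gen mu -> countably_additive gen mu.
Proof. intros [H1 [H2 H3]]; split; auto. Qed.

Section CountablyAdditive.
Context {X : Type} (gen : (X -> Prop) -> Prop) (mu : (X -> Prop) -> R).
Hypothesis Hmu : countably_additive gen mu.

Lemma measure_empty : mu (fun _ => False) = 0.
Proof.
  destruct Hmu as [Hpos Hadd].
  assert (Hs := Hadd (fun _ _ => False) (fun _ => measurable_empty gen)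
                     ltac:(intros n m x _ [])).
  cbv beta in Hs.
  replace (fun x : X => exists _ : nat, False) with (fun _ : X => False) in Hs
    by (apply pred_ext; intro; split; [tauto|intros [_ []]]).
  set (c := mu (fun _ => False)) in *.
  assert (Hc : 0 <= c) by apply Hpos, measurable_empty.
  destruct (Rle_lt_or_eq_dec 0 c Hc) as [Hlt|Heq]; [|auto].
  exfalso. destruct (Hs c Hlt) as [N HN]. specialize (HN (S N) ltac:(lia)).
  rewrite sum_f_R0_fsum, fsum_const in HN. unfold Rdist in HN.
  assert (0 <= INR N * c) by (apply Rmult_le_pos; [apply pos_INR | lra]).
  rewrite !S_INR in HN.
  replace ((INR N + 1 + 1) * c - c) with (INR N * c + c) in HN by ring.
  rewrite Rabs_right in HN; lra.
Qed.

Lemma measure_fsum (F : nat -> X -> Prop) n :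
  (forall i, measurable gen (F i)) -> disjoint_family F ->
  mu (fun x => exists i, (i < n)%nat /\ F i x) = fsum (fun i => mu (F i)) n.
Proof.
  intros Hm Hd. destruct Hmu as [_ Hadd].
  set (G := fun i x => (i < n)%nat /\ F i x).
  assert (Hs := Hadd G ltac:(intro i; apply measurable_and; [apply measurable_const|auto])
                       ltac:(intros a b x Hab [_ Ha] [_ Hb]; eapply Hd; eauto)).
  assert (Hz : forall i, (i >= n)%nat -> mu (G i) = 0).
  { intros i Hi. replace (G i) with (fun _ : X => False); [apply measure_empty|].
    apply pred_ext; unfold G; intro; split; [tauto|lia]. }
  change (mu (fun x => exists i, G i x) = fsum (fun i => mu (F i)) n).
  rewrite (uniqueness_sum _ _ _ Hs (infinite_sum_eventually_0 _ n Hz)).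
  apply fsum_ext. intros i Hi. f_equal. apply pred_ext; unfold G; intuition.
Qed.

Lemma measure_or_disjoint A B : measurable gen A -> measurable gen B ->
  (forall x, A x -> B x -> False) -> mu (fun x => A x \/ B x) = mu A + mu B.
Proof.
  intros HA HB Hd.
  set (F := fun i : nat => match i with O => A | 1%nat => B | _ => fun _ => False end).
  assert (E := measure_fsum F 2
    ltac:(intros [|[|i]]; unfold F; auto; apply measurable_empty)
    ltac:(intros [|[|a]] [|[|b]] x Hab Ha Hb; unfold F in *; simpl in *;
          try congruence; try tauto; [exact (Hd x Ha Hb) | exact (Hd x Hb Ha)])).
  simpl in E. rewrite Rplus_0_l in E. rewrite <- E. f_equal.
  apply pred_ext; intro x; split.
  - intros [H|H]; [exists O| exists 1%nat]; simpl; split; auto; lia.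
  - intros [[|[|i]] [Hi H]]; unfold F in H; simpl in H; auto. lia.
Qed.

Lemma measure_not A : measurable gen A ->
  mu (fun x => ~ A x) = mu (fun _ => True) - mu A.
Proof.
  intros HA. assert (E := measure_or_disjoint A (fun x => ~ A x) HA (meas_compl gen A HA)
                           ltac:(auto)).
  cbv beta in E.
  replace (fun x => A x \/ ~ A x) with (fun _ : X => True) in E
    by (apply pred_ext; intro x; split; auto; intros; apply classic).
  lra.
Qed.

End CountablyAdditive.

Section Dynkin.
Context {X : Type} (C : (X -> Prop) -> Prop).

Inductive dynkin : (X -> Prop) -> Prop :=
| dynkin_base : forall A, C A -> dynkin A
| dynkin_full : dynkin (fun _ => True)
| dynkin_compl : forall A, dynkin A -> dynkin (fun x => ~ A x)
| dynkin_union : forall F : nat -> X -> Prop,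
    (forall n, dynkin (F n)) -> disjoint_family F -> dynkin (fun x => exists n, F n x).

Lemma dynkin_ext A B : dynkin A -> (forall x, A x <-> B x) -> dynkin B.
Proof. intros H E; replace B with A; auto; apply pred_ext; auto. Qed.

Lemma dynkin_empty : dynkin (fun _ => False).
Proof.
  apply dynkin_ext with (fun x => ~ (fun _ => True) x).
  - apply dynkin_compl, dynkin_full.
  - intuition.
Qed.

Lemma dynkin_or_disjoint A B : dynkin A -> dynkin B ->
  (forall x, A x -> B x -> False) -> dynkin (fun x => A x \/ B x).
Proof.
  intros HA HB Hd.
  set (F := fun i : nat => match i with O => A | 1%nat => B | _ => fun _ => False end).
  apply dynkin_ext with (fun x => exists n, F n x).
  - apply dynkin_union.
    + intros [|[|i]]; unfold F; auto. apply dynkin_empty.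
    + intros [|[|a]] [|[|b]] x Hab Ha Hb; unfold F in *; simpl in *;
        try congruence; try tauto; [exact (Hd x Ha Hb) | exact (Hd x Hb Ha)].
  - intro x; split.
    + intros [[|[|i]] H]; unfold F in H; auto. destruct H.
    + intros [H|H]; [exists O | exists 1%nat]; auto.
Qed.

Hypothesis C_and : forall A B, C A -> C B -> C (fun x => A x /\ B x).

Lemma dynkin_and_base A B : C A -> dynkin B -> dynkin (fun x => A x /\ B x).
Proof.
  intros HA HB; induction HB as [B HB| |B HB IH|F HF IH Hd].
  - apply dynkin_base, C_and; auto.
  - apply dynkin_ext with A; [apply dynkin_base; auto | intuition].
  - apply dynkin_ext with (fun x => ~ (~ A x \/ (A x /\ B x))).
    + apply dynkin_compl, dynkin_or_disjoint;
        [apply dynkin_compl, dynkin_base; auto | auto | intros x H1 [H2 _]; auto].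
    + intro x; split.
      * intro H; split; apply NNPP; intro H'; apply H;
          [left; auto | right; split; auto; apply NNPP; auto].
      * intros [H1 H2] [H|[_ H]]; auto.
  - apply dynkin_ext with (fun x => exists n, (fun n x => A x /\ F n x) n x).
    + apply dynkin_union; auto. intros n m x Hnm [_ H1] [_ H2]; eapply Hd; eauto.
    + intro x; split.
      * intros [n [H1 H2]]; split; [|exists n]; auto.
      * intros [H1 [n H2]]; exists n; auto.
Qed.

Lemma dynkin_and A B : dynkin A -> dynkin B -> dynkin (fun x => A x /\ B x).
Proof.
  intros HA HB; revert B HB; induction HA as [A HA| |A HA IH|F HF IH Hd]; intros B HB.
  - apply dynkin_and_base; auto.
  - apply dynkin_ext with B; auto. intuition.
  - apply dynkin_ext with (fun x => ~ (~ B x \/ (A x /\ B x))).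
    + apply dynkin_compl, dynkin_or_disjoint;
        [apply dynkin_compl; auto | auto | intros x H1 [_ H2]; auto].
    + intro x; split.
      * intro H; split; apply NNPP; intro H'; apply H;
          [right; split; auto; apply NNPP; auto | left; auto].
      * intros [H1 H2] [H|[H _]]; auto.
  - apply dynkin_ext with (fun x => exists n, (fun n x => F n x /\ B x) n x).
    + apply dynkin_union; auto. intros n m x Hnm [H1 _] [H2 _]; eapply Hd; eauto.
    + intro x; split.
      * intros [n [H1 H2]]; split; [exists n|]; auto.
      * intros [[n H1] H2]; exists n; auto.
Qed.

Lemma dynkin_or A B : dynkin A -> dynkin B -> dynkin (fun x => A x \/ B x).
Proof.
  intros HA HB. apply dynkin_ext with (fun x => ~ (~ A x /\ ~ B x)).
  - apply dynkin_compl, dynkin_and; apply dynkin_compl; auto.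
  - intro x; split.
    + intro H; apply NNPP; intro H'; apply H; split; intro; apply H'; auto.
    + intros [H|H] [H1 H2]; auto.
Qed.

Lemma dynkin_first_n (F : nat -> X -> Prop) n :
  (forall i, dynkin (F i)) -> dynkin (fun x => exists i, (i < n)%nat /\ F i x).
Proof.
  intro H; induction n.
  - rewrite exists_lt_0. apply dynkin_empty.
  - rewrite exists_lt_S. apply dynkin_or; auto.
Qed.

Lemma dynkin_exists (F : nat -> X -> Prop) :
  (forall i, dynkin (F i)) -> dynkin (fun x => exists n, F n x).
Proof.
  intro H.
  (* disjointify: keep x in the n-th piece only if no earlier F i contains it *)
  apply dynkin_ext with
    (fun x => exists n, (fun n x => F n x /\ ~ (exists i, (i < n)%nat /\ F i x)) n x).
  - apply dynkin_union.
    + intro n. apply dynkin_and; auto. apply dynkin_compl, dynkin_first_n; auto.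
    + intros n m x Hnm [H1 H2] [H3 H4].
      destruct (Nat.lt_total n m) as [Hlt|[Heq|Hlt]];
        [apply H4; exists n; auto | auto | apply H2; exists m; auto].
  - intro x; split.
    + intros [n [Hn _]]; exists n; auto.
    + intros [n Hn].
      assert (Hmin : forall k n, (n <= k)%nat -> F n x ->
                exists m, F m x /\ ~ (exists i, (i < m)%nat /\ F i x)).
      { induction k; intros n' Hn' Hx.
        - exists n'; split; auto. intros [i [Hi _]]; lia.
        - destruct (classic (exists i, (i < n')%nat /\ F i x)) as [[i [Hi Hxi]]|Hno].
          + apply (IHk i); auto; lia.
          + exists n'; auto. }
      exact (Hmin n n (le_n n) Hn).
Qed.

Lemma dynkin_measurable A : measurable C A -> dynkin A.
Proof.
  intros HA; induction HA.
  - apply dynkin_base; auto.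
  - apply dynkin_full.
  - apply dynkin_compl; auto.
  - apply dynkin_exists; auto.
Qed.

End Dynkin.

Theorem pi_lambda {X : Type} (gen C : (X -> Prop) -> Prop) (mu1 mu2 : (X -> Prop) -> R) :
  countably_additive gen mu1 -> countably_additive gen mu2 ->
  (forall A B, C A -> C B -> C (fun x => A x /\ B x)) ->
  (forall A, C A -> measurable gen A) ->
  (forall G, gen G -> measurable C G) ->
  mu1 (fun _ => True) = mu2 (fun _ => True) ->
  (forall A, C A -> mu1 A = mu2 A) ->
  meas_eq gen mu1 mu2.
Proof.
  intros H1 H2 C_and C_meas gen_C Hfull Hagree A HA.
  assert (HD : dynkin C A).
  { apply dynkin_measurable; auto. apply (measurable_sub_gen gen C); auto. }
  cut (measurable gen A /\ mu1 A = mu2 A); [tauto|].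
  clear HA. induction HD as [A HA| |A HA IH|F HF IH Hd].
  - split; auto.
  - split; auto. apply meas_full.
  - destruct IH as [IHm IHe]. split; [apply meas_compl; auto|].
    rewrite (measure_not gen mu1 H1 A IHm), (measure_not gen mu2 H2 A IHm). lra.
  - split; [apply meas_union; intro n; apply IH|].
    apply (uniqueness_sum (fun n => mu1 (F n))).
    + apply H1; auto. intro n; apply IH.
    + replace (fun n => mu1 (F n)) with (fun n => mu2 (F n)).
      * apply H2; auto. intro n; apply IH.
      * apply functional_extensionality; intro n; symmetry; apply IH.
Qed.

Section FiniteDependence.
Context {X K : Type} (gen : (X -> Prop) -> Prop).
Variables (ev : X -> K -> bool) (upd : X -> K -> bool -> X).
Hypothesis ev_upd_eq : forall x k b, ev (upd x k b) k = b.
Hypothesis ev_upd_neq : forall x k b k', k <> k' -> ev (upd x k b) k' = ev x k'.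
Hypothesis measurable_ev : forall k b, measurable gen (fun x => ev x k = b).

Lemma measurable_of_finite_dependence (L : list K) (E : X -> Prop) :
  (forall x y, (forall k, In k L -> ev x k = ev y k) -> E x -> E y) -> measurable gen E.
Proof.
  revert E; induction L as [|k L IH]; intros E HE.
  - destruct (classic (exists x, E x)) as [[x0 Hx0]|Hno].
    + replace E with (fun _ : X => True); [apply meas_full|].
      apply pred_ext; intro y; split; auto. intros _. apply (HE x0 y); simpl; tauto.
    + replace E with (fun _ : X => False); [apply measurable_empty|].
      apply pred_ext; intro y; split; [tauto|]. intro; apply Hno; eauto.
  - assert (Hsame : forall x b, ev x k = b -> (E x <-> E (upd x k b))).
    { intros x b <-; split; apply HE; intros k' _; destruct (classic (k = k')) as [<-|ne];
        rewrite ?ev_upd_eq, ?ev_upd_neq; auto. }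
    (* E is the union over b of {ev x k = b} /\ (its section at k := b), which
       depends only on L *)
    assert (Hb : forall b, measurable gen (fun x => ev x k = b /\ E (upd x k b))).
    { intro b. apply measurable_and; auto. apply IH.
      intros x y Hxy Hx. apply (HE (upd x k b)); auto.
      intros k' [<-|Hk'].
      + rewrite !ev_upd_eq; auto.
      + destruct (classic (k = k')) as [<-|ne]; rewrite ?ev_upd_eq, ?ev_upd_neq; auto. }
    replace E with (fun x => (ev x k = true /\ E (upd x k true)) \/
                             (ev x k = false /\ E (upd x k false))).
    + apply measurable_or; auto.
    + apply pred_ext; intro x; split.
      * intros [[H1 H2]|[H1 H2]]; eapply Hsame; eauto.
      * intro Hx. destruct (ev x k) eqn:Hk; [left|right]; split; auto;
          apply (Hsame x _ Hk); auto.
Qed.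

End FiniteDependence.

Definition updZ (w : bseqZ) (z : Z) (b : bool) : bseqZ :=
  fun z' => if Z.eq_dec z z' then b else w z'.

Lemma measurable_coordZ z b : measurable genZ (fun w : bseqZ => w z = b).
Proof. apply meas_gen. exists z, b. intro; tauto. Qed.

Definition windowZ (N : nat) : list Z :=
  map (fun i => (Z.of_nat i - Z.of_nat N)%Z) (seq 0 (2 * N + 1)).

Lemma in_windowZ N z : (- Z.of_nat N <= z <= Z.of_nat N)%Z -> In z (windowZ N).
Proof.
  intro H. apply in_map_iff. exists (Z.to_nat (z + Z.of_nat N)). split.
  - lia.
  - apply in_seq. lia.
Qed.

Definition cylZ (N : nat) (B : bseqZ -> Prop) : Prop :=
  forall w w', (forall z, (- Z.of_nat N <= z <= Z.of_nat N)%Z -> w z = w' z) -> B w -> B w'.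

Lemma cylZ_measurable N B : cylZ N B -> measurable genZ B.
Proof.
  intro H. apply (measurable_of_finite_dependence genZ (fun w z => w z) updZ) with (windowZ N).
  - intros; unfold updZ; destruct (Z.eq_dec k k); congruence.
  - intros; unfold updZ; destruct (Z.eq_dec k k'); congruence.
  - apply measurable_coordZ.
  - intros x y Hxy. apply H. intros z Hz. apply Hxy, in_windowZ; auto.
Qed.

Lemma genZ_cylZ G : genZ G -> exists N, cylZ N G.
Proof.
  intros [z [b HG]]. exists (Z.to_nat (Z.abs z)). intros w w' Hw Gw.
  apply HG. apply HG in Gw. rewrite <- Hw; auto. lia.
Qed.

Definition evP (p : XProd) (c : Z + nat) : bool :=
  match c with inl z => fst p z | inr i => snd p i end.

Definition updP (p : XProd) (c : Z + nat) (b : bool) : XProd :=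
  match c with
  | inl z => (updZ (fst p) z b, snd p)
  | inr i => (fst p, fun i' => if Nat.eq_dec i i' then b else snd p i')
  end.

Lemma measurable_coordP c b : measurable genProd (fun p => evP p c = b).
Proof.
  apply meas_gen. destruct c as [z|i]; [left; exists z, b | right; exists i, b]; simpl; tauto.
Qed.

Lemma measurableP_of_finite_dependence (L : list (Z + nat)) E :
  (forall x y, (forall k, In k L -> evP x k = evP y k) -> E x -> E y) ->
  measurable genProd E.
Proof.
  apply (measurable_of_finite_dependence genProd evP updP).
  - intros x [z|i] b; simpl; unfold updZ;
      [destruct (Z.eq_dec z z) | destruct (Nat.eq_dec i i)]; congruence.
  - intros x [z|i] b [z'|i'] H; simpl; auto; unfold updZ.
    + destruct (Z.eq_dec z z'); congruence.
    + destruct (Nat.eq_dec i i'); congruence.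
  - apply measurable_coordP.
Qed.

Definition cyl (N : nat) (E : XProd -> Prop) : Prop :=
  forall p q, (forall z, (- Z.of_nat N <= z <= Z.of_nat N)%Z -> fst p z = fst q z) ->
    (forall i, (i < N)%nat -> snd p i = snd q i) -> E p -> E q.

Definition cylinder (E : XProd -> Prop) : Prop := exists N, cyl N E.

Lemma cyl_mono N M E : (N <= M)%nat -> cyl N E -> cyl M E.
Proof.
  intros HNM H p q H1 H2. apply H; [intros z Hz; apply H1 | intros i Hi; apply H2]; lia.
Qed.

Lemma cyl_empty : cyl 0 (fun _ => False).
Proof. intros p q _ _ []. Qed.

Lemma cyl_or N M A B : cyl N A -> cyl M B -> cyl (Nat.max N M) (fun x => A x \/ B x).
Proof.
  intros HA HB p q H1 H2 [H|H]; [left; apply (HA p q) | right; apply (HB p q)]; auto;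
    intros; try apply H1; try apply H2; lia.
Qed.

Lemma cyl_and N M A B : cyl N A -> cyl M B -> cyl (Nat.max N M) (fun x => A x /\ B x).
Proof.
  intros HA HB p q H1 H2 [H H']; split; [apply (HA p q) | apply (HB p q)]; auto;
    intros; try apply H1; try apply H2; lia.
Qed.

Lemma cyl_not N A : cyl N A -> cyl N (fun x => ~ A x).
Proof. intros HA p q H1 H2 Hp Hq. apply Hp. apply (HA q p); auto; intros; symmetry; auto. Qed.

Lemma cylinder_first_n (F : nat -> XProd -> Prop) n :
  (forall i, cylinder (F i)) -> cylinder (fun x => exists i, (i < n)%nat /\ F i x).
Proof.
  intro H. induction n.
  - rewrite exists_lt_0. exists 0%nat. apply cyl_empty.
  - rewrite exists_lt_S. destruct IHn as [N1 H1], (H n) as [N2 H2].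
    exists (Nat.max N1 N2). apply cyl_or; auto.
Qed.

Lemma genProd_cylinder G : genProd G -> cylinder G.
Proof.
  intros [[z [b HG]]|[i [b HG]]].
  - exists (Z.to_nat (Z.abs z)). intros p q H1 H2 Gp.
    apply HG. apply HG in Gp. rewrite <- H1; auto. lia.
  - exists (S i). intros p q H1 H2 Gp. apply HG. apply HG in Gp. rewrite <- H2; auto.
Qed.

Definition cylN (N : nat) (P : bseqN -> Prop) : Prop :=
  forall a a', (forall i, (i < N)%nat -> a i = a' i) -> P a -> P a'.

Lemma cylN_measurable N P : cylN N P -> measurable genProd (fun p => P (snd p)).
Proof.
  intro H. apply measurableP_of_finite_dependence with (map inr (seq 0 N)).
  intros x y Hxy. apply H. intros i Hi. apply (Hxy (inr i)). apply in_map, in_seq; lia.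
Qed.

Lemma measurable_shiftn n B : measurable genZ B -> measurable genZ (fun w => B (shiftn n w)).
Proof.
  intro HB; induction HB as [A [z [b HA]]| |A HA IH|F HF IH].
  - replace (fun w => A (shiftn n w)) with (fun w : bseqZ => w (z + Z.of_nat n)%Z = b).
    + apply measurable_coordZ.
    + apply pred_ext; intro w; rewrite HA; unfold shiftn; tauto.
  - apply meas_full.
  - apply meas_compl; auto.
  - apply meas_union; auto.
Qed.

Lemma measurable_fst B : measurable genZ B -> measurable genProd (fun p => B (fst p)).
Proof.
  intro HB; induction HB as [A [z [b HA]]| |A HA IH|F HF IH].
  - replace (fun p : XProd => A (fst p)) with (fun p => evP p (inl z) = b).
    + apply measurable_coordP.
    + apply pred_ext; intro p; rewrite HA; simpl; tauto.
  - apply meas_full.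
  - apply meas_compl; auto.
  - apply meas_union; auto.
Qed.

Lemma odometer_local (a a' : bseqN) i :
  (forall j, (j <= i)%nat -> a j = a' j) -> odometer a i = odometer a' i.
Proof.
  intro H. unfold odometer.
  assert (E : forall l, (forall j, In j l -> a j = a' j) -> forallb a l = forallb a' l).
  { induction l; simpl; intros Hl; auto. rewrite Hl, IHl; auto. }
  rewrite E, H; auto. intros j Hj; apply in_seq in Hj; apply H; lia.
Qed.

Lemma measurable_SxO E : measurable genProd E -> measurable genProd (fun p => E (SxO p)).
Proof.
  intro HE; induction HE as [A [[z [b HA]]|[i [b HA]]]| |A HA IH|F HF IH].
  - replace (fun p => A (SxO p)) with (fun p => evP p (inl (z + 1)%Z) = b).
    + apply measurable_coordP.
    + apply pred_ext; intro p; rewrite HA; simpl; unfold Defs.shift, shiftn; simpl; tauto.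
  - replace (fun p => A (SxO p)) with (fun p : XProd => odometer (snd p) i = b).
    + apply measurableP_of_finite_dependence with (map inr (seq 0 (S i))).
      intros x y Hxy H. rewrite <- H. apply odometer_local. intros j Hj.
      symmetry. apply (Hxy (inr j)). apply in_map, in_seq; lia.
    + apply pred_ext; intro p; rewrite HA; simpl; tauto.
  - apply meas_full.
  - apply meas_compl; auto.
  - apply meas_union; auto.
Qed.

Lemma pow2_neq0 k : (2 ^ k <> 0)%nat.
Proof. apply Nat.pow_nonzero; lia. Qed.

Lemma pow2_pos k : 0 < 2 ^ k.
Proof. apply pow_lt; lra. Qed.

Lemma bin_val_lt a k : (bin_val a k < 2 ^ k)%nat.
Proof. induction k; simpl; [lia|]. destruct (a k); lia. Qed.

Lemma bin_val_mod a k k' : (k <= k')%nat -> (bin_val a k' mod 2 ^ k = bin_val a k)%nat.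
Proof.
  intro H.
  assert (Hq : exists q, bin_val a k' = (bin_val a k + 2 ^ k * q)%nat).
  { induction H as [|m H [q Hq]]; [exists 0%nat; lia|].
    simpl. rewrite Hq. destruct (a m); [|exists q; lia].
    exists (q + 2 ^ (m - k))%nat. rewrite Nat.mul_add_distr_l, <- Nat.pow_add_r.
    replace (k + (m - k))%nat with m by lia. lia. }
  destruct Hq as [q ->].
  rewrite Nat.mul_comm, Nat.Div0.mod_add. apply Nat.mod_small, bin_val_lt.
Qed.

Lemma bin_val_testbit r k : bin_val (fun i => Nat.testbit r i) k = (r mod 2 ^ k)%nat.
Proof.
  induction k.
  - change (0%nat = r mod 2 ^ 0)%nat. rewrite Nat.pow_0_r, Nat.mod_1_r. reflexivity.
  - simpl bin_val. rewrite IHk.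
    rewrite Nat.pow_succ_r', (Nat.mul_comm 2 (2 ^ k)), Nat.Div0.mod_mul_r.
    assert (Hb := Nat.testbit_spec' r k).
    destruct (Nat.testbit r k); cbn [Nat.b2n] in Hb; rewrite <- Hb; lia.
Qed.

Lemma bin_val_top_bit a i : a i = (2 ^ i <=? bin_val a (S i))%nat.
Proof.
  simpl. assert (H := bin_val_lt a i).
  destruct (a i); symmetry; [apply Nat.leb_le | apply Nat.leb_gt]; lia.
Qed.

Lemma odometer_bin_val a k : bin_val (odometer a) k = ((bin_val a k + 1) mod 2 ^ k)%nat.
Proof.
  assert (Hpos := pow2_neq0 k).
  (* the carry propagates exactly while the leading digits are all 1 *)
  assert (H : if forallb a (seq 0 k)
              then bin_val (odometer a) k = 0%nat /\ bin_val a k = (2 ^ k - 1)%nat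
              else bin_val (odometer a) k = S (bin_val a k) /\ (S (bin_val a k) < 2 ^ k)%nat).
  { clear Hpos. induction k; [simpl; lia|].
    rewrite seq_S, forallb_app. simpl bin_val. simpl forallb.
    assert (Ho : odometer a k = if forallb a (seq 0 k) then negb (a k) else a k)
      by reflexivity.
    rewrite Ho. assert (Hp := pow2_neq0 k). simpl Nat.pow.
    destruct (forallb a (seq 0 k)); destruct IHk as [H1 H2]; destruct (a k); simpl; lia. }
  destruct (forallb a (seq 0 k)); destruct H as [H1 H2]; rewrite H1.
  - rewrite H2. replace (2 ^ k - 1 + 1)%nat with (2 ^ k)%nat by lia.
    symmetry; apply Nat.Div0.mod_same.
  - symmetry. rewrite Nat.mod_small; lia.
Qed.

Lemma iter_odometer_bin_val n a k :
  bin_val (Nat.iter n odometer a) k = ((bin_val a k + n) mod 2 ^ k)%nat.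
Proof.
  induction n.
  - simpl. rewrite Nat.add_0_r. symmetry. apply Nat.mod_small, bin_val_lt.
  - simpl. rewrite odometer_bin_val, IHn, Nat.Div0.add_mod_idemp_l. f_equal. lia.
Qed.

Lemma shiftn_add m n w : shiftn m (shiftn n w) = shiftn (m + n) w.
Proof. unfold shiftn. apply functional_extensionality; intro j. f_equal. lia. Qed.

Lemma shiftn_0 w : shiftn 0 w = w.
Proof. unfold shiftn. apply functional_extensionality; intro j. f_equal. lia. Qed.

Lemma iter_SxO n p : Nat.iter n SxO p = (shiftn n (fst p), Nat.iter n odometer (snd p)).
Proof.
  induction n.
  - destruct p as [w a]. simpl. rewrite shiftn_0. reflexivity.
  - simpl Nat.iter. rewrite IHn. unfold SxO, Defs.shift. simpl. rewrite shiftn_add. reflexivity.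
Qed.

Lemma A_rk_cylN r k : cylN k (A_rk r k).
Proof.
  intros a a' H Ha. unfold A_rk in *. rewrite <- Ha. symmetry.
  clear Ha. induction k; simpl; auto.
  rewrite IHk by (intros; apply H; lia). rewrite H by lia. auto.
Qed.

Lemma measurable_A_rk r k : measurable genProd (fun p => A_rk r k (snd p)).
Proof. apply cylN_measurable with k. apply A_rk_cylN. Qed.

Lemma measurable_rect B r k : measurable genZ B ->
  measurable genProd (fun p => B (fst p) /\ A_rk r k (snd p)).
Proof. intros HB. apply measurable_and; [apply measurable_fst; auto | apply measurable_A_rk]. Qed.

Lemma A_rk_disjoint a r r' k : A_rk r k a -> A_rk r' k a -> r = r'.
Proof. unfold A_rk; congruence. Qed.

Definition rectangle (E : XProd -> Prop) : Prop :=
  exists B k r, measurable genZ B /\ (r < 2 ^ k)%nat /\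
    E = (fun p => B (fst p) /\ A_rk r k (snd p)).

Lemma rectangle_and_le B1 k1 r1 B2 k2 r2 : measurable genZ B1 -> measurable genZ B2 ->
  (r2 < 2 ^ k2)%nat -> (k1 <= k2)%nat ->
  rectangle (fun p => (B1 (fst p) /\ A_rk r1 k1 (snd p)) /\ (B2 (fst p) /\ A_rk r2 k2 (snd p))).
Proof.
  intros HB1 HB2 Hr2 Hk.
  assert (Hsub : forall a, A_rk r2 k2 a -> A_rk (r2 mod 2 ^ k1) k1 a).
  { intros a Ha. unfold A_rk in *. rewrite <- Ha. symmetry; apply bin_val_mod; auto. }
  destruct (Nat.eq_dec (r2 mod 2 ^ k1) r1) as [<-|ne].
  - exists (fun w => B1 w /\ B2 w), k2, r2. split; [apply measurable_and; auto | split; auto].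
    apply pred_ext; intro p. specialize (Hsub (snd p)). tauto.
  - exists (fun _ => False), 0%nat, 0%nat. split; [apply measurable_empty | split; [simpl; lia|]].
    apply pred_ext; intro p. split; [|tauto].
    intros [[_ H1] [_ H2]]. exfalso. apply ne. eapply A_rk_disjoint; eauto.
Qed.

Lemma rectangle_and A B : rectangle A -> rectangle B -> rectangle (fun x => A x /\ B x).
Proof.
  intros [B1 [k1 [r1 [HB1 [Hr1 ->]]]]] [B2 [k2 [r2 [HB2 [Hr2 ->]]]]].
  destruct (le_ge_dec k1 k2) as [Hk|Hk].
  - apply rectangle_and_le; auto.
  - destruct (rectangle_and_le B2 k2 r2 B1 k1 r1 HB2 HB1 Hr1 Hk) as [B [k [r [H1 [H2 H3]]]]].
    exists B, k, r. do 2 (split; auto). rewrite <- H3. apply pred_ext; intro; tauto.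
Qed.

Lemma rectangle_measurable E : rectangle E -> measurable genProd E.
Proof. intros [B [k [r [HB [Hr ->]]]]]. apply measurable_rect; auto. Qed.

Lemma digit_as_union a i b :
  a i = b <-> exists n, (2 ^ i <=? n mod 2 ^ S i)%nat = b /\ A_rk (n mod 2 ^ S i) (S i) a.
Proof.
  rewrite bin_val_top_bit. unfold A_rk. split.
  - intros <-. exists (bin_val a (S i)). rewrite Nat.mod_small by apply bin_val_lt. auto.
  - intros [n [<- ->]]. reflexivity.
Qed.

Lemma genProd_rectangles G : genProd G -> measurable rectangle G.
Proof.
  intros [[z [b HG]]|[i [b HG]]].
  - apply meas_gen. exists (fun w => w z = b), 0%nat, 0%nat.
    split; [apply measurable_coordZ | split; [simpl; lia|]].
    apply pred_ext; intro p. rewrite HG. unfold A_rk; simpl. tauto.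
  - replace G with (fun p => exists n,
        (fun _ : bseqZ => (2 ^ i <=? n mod 2 ^ S i)%nat = b) (fst p) /\
        A_rk (n mod 2 ^ S i) (S i) (snd p)).
    + apply meas_union. intro n. apply meas_gen.
      exists (fun _ => (2 ^ i <=? n mod 2 ^ S i)%nat = b), (S i), (n mod 2 ^ S i).
      split; [apply measurable_const | split; [apply Nat.mod_upper_bound, pow2_neq0 | auto]].
    + apply pred_ext; intro p. rewrite HG, digit_as_union. reflexivity.
Qed.

Theorem meas_eq_of_rectangles (mu1 mu2 : (XProd -> Prop) -> R) :
  countably_additive genProd mu1 -> countably_additive genProd mu2 ->
  (forall B k r, measurable genZ B -> (r < 2 ^ k)%nat ->
     mu1 (fun p => B (fst p) /\ A_rk r k (snd p)) =
     mu2 (fun p => B (fst p) /\ A_rk r k (snd p))) ->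
  meas_eq genProd mu1 mu2.
Proof.
  intros H1 H2 Hagree.
  apply (pi_lambda genProd rectangle mu1 mu2 H1 H2 rectangle_and rectangle_measurable
                   genProd_rectangles).
  - replace (fun _ : XProd => True)
      with (fun p : XProd => (fun _ : bseqZ => True) (fst p) /\ A_rk 0 0 (snd p)).
    + apply (Hagree (fun _ => True)); [apply meas_full | simpl; lia].
    + apply pred_ext; intro p; unfold A_rk; simpl; tauto.
  - intros E [B [k [r [HB [Hr ->]]]]]. apply Hagree; auto.
Qed.

Lemma add_mod_eq_r x r m : (x < m)%nat -> (r < m)%nat -> ((x + r) mod m = r <-> x = 0)%nat.
Proof.
  intros Hx Hr. destruct (lt_dec (x + r) m).
  - rewrite Nat.mod_small by lia. lia.
  - replace (x + r)%nat with ((x + r - m) + 1 * m)%nat by lia.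
    rewrite Nat.Div0.mod_add, Nat.mod_small by lia. lia.
Qed.

Section Invariant.
Variable nu : (XProd -> Prop) -> R.
Hypothesis Hnu : inM nu.

Lemma inM_countably_additive : countably_additive genProd nu.
Proof. apply prob_countably_additive, Hnu. Qed.

Lemma inM_iter_invariant n E : measurable genProd E ->
  nu (fun p => E (Nat.iter n SxO p)) = nu E.
Proof.
  revert E; induction n; intros E HE; [reflexivity|].
  change (nu (fun p => E (Nat.iter (S n) SxO p)))
    with (nu (fun p => (fun q => E (SxO q)) (Nat.iter n SxO p))).
  rewrite IHn by (apply measurable_SxO; auto).
  apply (proj2 Hnu E HE).
Qed.

Lemma inM_rect_shift B k r : measurable genZ B -> (r < 2 ^ k)%nat ->
  nu (fun p => B (fst p) /\ A_rk r k (snd p)) =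
  nu (fun p => B (shiftn r (fst p)) /\ A_rk 0 k (snd p)).
Proof.
  intros HB Hr. rewrite <- (inM_iter_invariant r _ (measurable_rect B r k HB)).
  f_equal. apply pred_ext; intro p. rewrite iter_SxO. unfold A_rk. cbn [fst snd].
  rewrite iter_odometer_bin_val, (add_mod_eq_r _ _ _ (bin_val_lt (snd p) k) Hr). tauto.
Qed.

Lemma inM_A_rk k r : (r < 2 ^ k)%nat -> nu (fun p => A_rk r k (snd p)) = / 2 ^ k.
Proof.
  (* the 2^k cylinders A_{r,k} partition the space and all have the mass of A_{0,k} *)
  assert (Hsame : forall r, (r < 2 ^ k)%nat ->
                    nu (fun p => A_rk r k (snd p)) = nu (fun p => A_rk 0 k (snd p))).
  { intros r' Hr'. assert (H := inM_rect_shift (fun _ => True) k r' (meas_full _) Hr').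
    cbv beta in H.
    transitivity (nu (fun p => True /\ A_rk r' k (snd p))); [f_equal; apply pred_ext; tauto|].
    rewrite H. f_equal. apply pred_ext; tauto. }
  assert (Hf := measure_fsum genProd nu inM_countably_additive
                  (fun r p => A_rk r k (snd p)) (2 ^ k) (fun r => measurable_A_rk r k)
                  ltac:(intros n m x Hnm H1 H2; apply Hnm; eapply A_rk_disjoint; eauto)).
  cbv beta in Hf.
  replace (fun x : XProd => exists i, (i < 2 ^ k)%nat /\ A_rk i k (snd x))
    with (fun _ : XProd => True) in Hf.
  2:{ apply pred_ext; intro p; split; auto. intros _.
      exists (bin_val (snd p) k). split; [apply bin_val_lt | reflexivity]. }
  rewrite (proj1 (proj2 (proj1 Hnu))), (fsum_ext _ _ _ Hsame), fsum_const, pow_INR in Hf.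
  change (INR 2) with 2 in Hf.
  intro Hr. rewrite Hsame by auto. assert (Hp := pow2_pos k).
  apply (Rmult_eq_reg_l (2 ^ k)); [|lra]. rewrite <- Hf. field. lra.
Qed.

Lemma inM_theta k B : theta k nu B = 2 ^ k * nu (fun p => B (fst p) /\ A_rk 0 k (snd p)).
Proof.
  unfold theta, P_rk. rewrite inM_A_rk by (apply Nat.neq_0_lt_0, pow2_neq0).
  assert (Hp := pow2_pos k). field. lra.
Qed.

Lemma inM_rect B k r : measurable genZ B -> (r < 2 ^ k)%nat ->
  nu (fun p => B (fst p) /\ A_rk r k (snd p)) = / 2 ^ k * theta k nu (fun w => B (shiftn r w)).
Proof.
  intros HB Hr. rewrite inM_theta, inM_rect_shift by auto.
  assert (Hp := pow2_pos k). field. lra.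
Qed.

Lemma inM_P_rk B k r : measurable genZ B -> (r < 2 ^ k)%nat ->
  P_rk r k nu B = theta k nu (fun w => B (shiftn r w)).
Proof.
  intros HB Hr. unfold P_rk at 1. rewrite inM_rect, inM_A_rk by auto.
  assert (Hp := pow2_pos k). field. lra.
Qed.

Lemma inM_theta_shift_invariant k :
  meas_eq genZ (shift_meas (2 ^ k) (theta k nu)) (theta k nu).
Proof.
  intros B HB. unfold shift_meas, pushforward. rewrite !inM_theta. f_equal.
  rewrite <- (inM_iter_invariant (2 ^ k) _ (measurable_rect B 0 k HB)).
  f_equal. apply pred_ext; intro p. rewrite iter_SxO. unfold A_rk. cbn [fst snd].
  rewrite iter_odometer_bin_val.
  replace (bin_val (snd p) k + 2 ^ k)%nat with (bin_val (snd p) k + 1 * 2 ^ k)%nat by lia.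
  rewrite Nat.Div0.mod_add, Nat.mod_small by apply bin_val_lt. tauto.
Qed.

Lemma inM_theta_average k : meas_eq genZ (theta k nu)
  (fun B => / 2 * (theta (S k) nu B + shift_meas (2 ^ k) (theta (S k) nu) B)).
Proof.
  intros B HB. unfold shift_meas, pushforward. rewrite inM_theta.
  assert (Hp := pow2_neq0 k).
  assert (Hsplit : nu (fun p => B (fst p) /\ A_rk 0 k (snd p)) =
     nu (fun p => B (fst p) /\ A_rk 0 (S k) (snd p)) +
     nu (fun p => B (fst p) /\ A_rk (2 ^ k) (S k) (snd p))).
  { rewrite <- (measure_or_disjoint genProd nu inM_countably_additive);
      try apply measurable_rect; auto.
    2:{ intros p [_ H1] [_ H2]. apply Hp. eapply A_rk_disjoint; eauto. }
    f_equal. apply pred_ext; intro p. unfold A_rk. simpl bin_val.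
    assert (H := bin_val_lt (snd p) k). destruct (snd p k); intuition lia. }
  rewrite Hsplit, (inM_rect B (S k) 0), (inM_rect B (S k) (2 ^ k)) by (auto; simpl; lia).
  replace (fun w => B (shiftn 0 w)) with B by (apply pred_ext; intro; rewrite shiftn_0; tauto).
  simpl pow. assert (Hp2 := pow2_pos k). field. lra.
Qed.

End Invariant.

Lemma theta_determines nu nu' : inM nu -> inM nu' ->
  (forall k, meas_eq genZ (theta k nu) (theta k nu')) ->
  (forall k r, (r < 2 ^ k)%nat -> meas_eq genZ (P_rk r k nu) (P_rk r k nu')) /\
  meas_eq genProd nu nu'.
Proof.
  intros H H' Hth. split.
  - intros k r Hr B HB. rewrite (inM_P_rk nu H), (inM_P_rk nu' H') by auto.
    apply Hth, measurable_shiftn; auto.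
  - apply meas_eq_of_rectangles; try apply inM_countably_additive; auto.
    intros B k r HB Hr. rewrite (inM_rect nu H), (inM_rect nu' H') by auto.
    f_equal. apply Hth, measurable_shiftn; auto.
Qed.

Definition Z_of_code (h : nat) : Z :=
  if Nat.even h then Z.of_nat (Nat.div2 h) else (- Z.of_nat (S (Nat.div2 h)))%Z.

Definition code_of_Z (z : Z) : nat :=
  if (0 <=? z)%Z then (2 * Z.to_nat z)%nat else (S (2 * (Z.to_nat (- z) - 1)))%nat.

Definition coord_of_code (j : nat) : Z + nat :=
  if Nat.even j then inl (Z_of_code (Nat.div2 j)) else inr (Nat.div2 j).

Definition code_of_coord (c : Z + nat) : nat :=
  match c with inl z => (2 * code_of_Z z)%nat | inr i => S (2 * i) end.

Lemma even_double n : Nat.even (2 * n) = true.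
Proof. rewrite Nat.even_mul. reflexivity. Qed.

Lemma even_succ_double n : Nat.even (S (2 * n)) = false.
Proof. rewrite Nat.even_succ, Nat.odd_mul. reflexivity. Qed.

Lemma coord_of_codeK c : coord_of_code (code_of_coord c) = c.
Proof.
  destruct c as [z|i]; unfold coord_of_code, code_of_coord.
  - rewrite even_double, Nat.div2_double. f_equal.
    unfold Z_of_code, code_of_Z. destruct (0 <=? z)%Z eqn:E.
    + rewrite even_double, Nat.div2_double. apply Z.leb_le in E. lia.
    + rewrite even_succ_double, Nat.div2_succ_double. apply Z.leb_gt in E. lia.
  - rewrite even_succ_double, Nat.div2_succ_double. reflexivity.
Qed.

Lemma code_of_coord_window N c :
  match c with
  | inl z => (- Z.of_nat N <= z <= Z.of_nat N)%Z
  | inr i => (i < N)%nat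
  end -> (code_of_coord c < 4 * N + 4)%nat.
Proof.
  destruct c as [z|i]; simpl; [|lia].
  unfold code_of_Z. destruct (0 <=? z)%Z eqn:E; [apply Z.leb_le in E|apply Z.leb_gt in E]; lia.
Qed.

Section Compactness.
Variable G : nat -> XProd -> Prop.
Hypothesis G_cyl : forall n, cylinder (G n).
Hypothesis G_decr : forall n m x, (n <= m)%nat -> G m x -> G n x.
Hypothesis G_nonempty : forall n, exists x, G n x.

Definition extendable (j : nat) (f : nat -> bool) : Prop :=
  forall n, exists y, G n y /\ forall i, (i < j)%nat -> evP y (coord_of_code i) = f i.

Definition set_bit (f : nat -> bool) (j : nat) (b : bool) : nat -> bool :=
  fun i => if Nat.eqb i j then b else f i.

Definition extend_prefix (j : nat) (f : nat -> bool) : nat -> bool :=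
  if excluded_middle_informative (extendable (S j) (set_bit f j true))
  then set_bit f j true else set_bit f j false.

(* Koenig-style choice: fix the coordinates one at a time, in the order of
   [coord_of_code], so that every [G n] keeps a point with the chosen prefix. *)
Fixpoint prefix (j : nat) : nat -> bool :=
  match j with O => fun _ => false | S j => extend_prefix j (prefix j) end.

Lemma prefix_extendable j : extendable j (prefix j).
Proof.
  induction j.
  - intro n. destruct (G_nonempty n) as [y Hy]. exists y. split; auto. intros; lia.
  - simpl. unfold extend_prefix.
    destruct (excluded_middle_informative (extendable (S j) (set_bit (prefix j) j true)))
      as [Ht|Ht]; auto.
    (* if neither digit works, failures at levels n1 and n2 contradict level max n1 n2 *)
    apply NNPP; intro Hf.
    apply not_all_ex_not in Ht. destruct Ht as [n1 Hn1].
    apply not_all_ex_not in Hf. destruct Hf as [n2 Hn2].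
    destruct (IHj (Nat.max n1 n2)) as [y [Gy Hy]].
    destruct (evP y (coord_of_code j)) eqn:Ej; [apply Hn1 | apply Hn2];
      exists y; (split; [apply (G_decr _ (Nat.max n1 n2)); auto; lia|]);
      intros i Hi; unfold set_bit;
      (destruct (Nat.eqb_spec i j); [subst; auto | apply Hy; lia]).
Qed.

Lemma prefix_stable j i : (i < j)%nat -> prefix j i = prefix (S i) i.
Proof.
  induction j; intros H; [lia|].
  destruct (Nat.eq_dec i j) as [<-|ne]; auto.
  change (prefix (S j) i) with (extend_prefix j (prefix j) i).
  unfold extend_prefix. rewrite <- IHj by lia.
  destruct (excluded_middle_informative _); unfold set_bit; destruct (Nat.eqb_spec i j); congruence.
Qed.

Lemma cantor_compact : exists x, forall n, G n x.
Proof.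
  set (g := fun c => prefix (S (code_of_coord c)) (code_of_coord c)).
  exists (fun z => g (inl z), fun i => g (inr i)). intro n.
  destruct (G_cyl n) as [N HN].
  destruct (prefix_extendable (4 * N + 4) n) as [y [Gy Hy]].
  assert (Hg : forall c, (code_of_coord c < 4 * N + 4)%nat -> evP y c = g c).
  { intros c Hc. rewrite <- (coord_of_codeK c) at 1. rewrite Hy by auto.
    apply prefix_stable; auto. }
  apply (HN y); auto.
  - intros z Hz. apply (Hg (inl z)), (code_of_coord_window N (inl z)); auto.
  - intros i Hi. apply (Hg (inr i)), (code_of_coord_window N (inr i)); auto.
Qed.

End Compactness.

Definition bits (r : nat) : bseqN := fun i => Nat.testbit r i.

Lemma bits_add_pow2 N r i : (i < N)%nat -> bits (2 ^ N + r) i = bits r i.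
Proof.
  intro Hi. unfold bits.
  rewrite <- (Nat.mod_pow2_bits_low (2 ^ N + r) N i Hi), <- (Nat.mod_pow2_bits_low r N i Hi).
  f_equal. replace (2 ^ N + r)%nat with (r + 1 * 2 ^ N)%nat by lia. apply Nat.Div0.mod_add.
Qed.

Lemma A_rk_bits r r' k : (r < 2 ^ k)%nat -> (A_rk r' k (bits r) <-> r' = r).
Proof.
  intro Hr. unfold A_rk, bits. rewrite bin_val_testbit, Nat.mod_small by auto. lia.
Qed.

Definition cyl_sections (N : nat) (E : XProd -> Prop) : Prop :=
  (forall w a a', (forall i, (i < N)%nat -> a i = a' i) -> E (w, a) -> E (w, a')) /\
  (forall a, measurable genZ (fun w => E (w, a))).

Lemma cyl_sections_le N M E : (N <= M)%nat -> cyl_sections N E -> cyl_sections M E.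
Proof. intros HNM [H1 H2]; split; auto. intros w a a' H. apply H1. intros; apply H; lia. Qed.

Lemma cyl_cyl_sections N E : cyl N E -> cyl_sections N E.
Proof.
  intro H; split.
  - intros w a a' Ha. apply H; auto.
  - intro a. apply cylZ_measurable with N. intros w w' Hw. apply (H (w, a) (w', a)); auto.
Qed.

Lemma cylinder_union_finite (F : nat -> XProd -> Prop) :
  (forall n, cylinder (F n)) -> cylinder (fun x => exists n, F n x) ->
  exists M, forall x, (exists n, F n x) -> exists i, (i < M)%nat /\ F i x.
Proof.
  intros HF [NU HU].
  (* the cylinders [G n] decrease and have empty intersection, so one is empty *)
  set (G := fun n x => (exists m, F m x) /\ ~ (exists i, (i < n)%nat /\ F i x)).
  apply NNPP; intro Hno.
  destruct (cantor_compact G) as [x Hx].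
  - intro n. destruct (cylinder_first_n F n HF) as [N1 H1]. exists (Nat.max NU N1).
    apply cyl_and; auto. apply cyl_not; auto.
  - intros n m x Hnm [H1 H2]. split; auto. intros [i [Hi Hx]]. apply H2.
    exists i; split; auto; lia.
  - intro n. apply NNPP; intro Hn. apply Hno. exists n. intros x Hx.
    apply NNPP; intro Hx'. apply Hn. exists x. split; auto.
  - destruct (Hx 0%nat) as [[i Hi] _]. destruct (Hx (S i)) as [_ H2].
    apply H2. exists i; split; auto.
Qed.


Section Premeasure.
Variable th : nat -> (bseqZ -> Prop) -> R.
Hypothesis th_prob : forall k, is_prob_measure genZ (th k).
Hypothesis th_rel : theta_relations th.

Lemma th_countably_additive k : countably_additive genZ (th k).
Proof. apply prob_countably_additive, th_prob. Qed.

Definition premeasure_at (N : nat) (E : XProd -> Prop) : R :=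
  fsum (fun r => / 2 ^ N * th N (fun w => E (shiftn r w, bits r))) (2 ^ N).

Lemma premeasure_at_S N E : cyl_sections N E -> premeasure_at N E = premeasure_at (S N) E.
Proof.
  intros HE. unfold premeasure_at.
  replace (2 ^ S N)%nat with (2 ^ N + 2 ^ N)%nat by (simpl; lia).
  rewrite fsum_split, <- fsum_plus. apply fsum_ext. intros r Hr.
  set (X := fun w => E (shiftn r w, bits r)).
  assert (HX : measurable genZ X) by exact (measurable_shiftn r _ (proj2 HE (bits r))).
  replace (fun w => E (shiftn (2 ^ N + r) w, bits (2 ^ N + r)))
    with (fun w => X (shiftn (2 ^ N) w)).
  2:{ apply pred_ext; intro w. unfold X. rewrite shiftn_add, (Nat.add_comm r).
      split; apply (proj1 HE); intros i Hi; rewrite bits_add_pow2; auto. }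
  rewrite (proj2 (th_rel N) X HX). unfold shift_meas, pushforward.
  simpl pow. assert (Hp := pow2_pos N). field. lra.
Qed.

Lemma premeasure_at_indep N M E : cyl_sections N E -> cyl_sections M E ->
  premeasure_at N E = premeasure_at M E.
Proof.
  assert (Hle : forall N j, cyl_sections N E -> premeasure_at N E = premeasure_at (N + j) E).
  { intros N' j HN. induction j; [rewrite Nat.add_0_r; auto|].
    rewrite IHj, Nat.add_succ_r. apply premeasure_at_S, cyl_sections_le with N'; auto; lia. }
  intros HN HM. destruct (le_ge_dec N M).
  - replace M with (N + (M - N))%nat by lia. apply Hle; auto.
  - replace N with (M + (N - M))%nat by lia. symmetry; apply Hle; auto.
Qed.

Lemma premeasure_at_nonneg N E : cyl_sections N E -> 0 <= premeasure_at N E.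
Proof.
  intro HE. apply fsum_nonneg. intros r Hr.
  apply Rmult_le_pos; [left; apply Rinv_0_lt_compat, pow2_pos|].
  apply (th_countably_additive N), (measurable_shiftn r _ (proj2 HE (bits r))).
Qed.

Lemma premeasure_at_or_disjoint N A B : cyl_sections N A -> cyl_sections N B ->
  (forall x, A x -> B x -> False) ->
  premeasure_at N (fun x => A x \/ B x) = premeasure_at N A + premeasure_at N B.
Proof.
  intros HA HB Hd. unfold premeasure_at. rewrite <- fsum_plus. apply fsum_ext. intros r Hr.
  rewrite (measure_or_disjoint genZ (th N) (th_countably_additive N)
             (fun w => A (shiftn r w, bits r)) (fun w => B (shiftn r w, bits r))).
  - ring.
  - exact (measurable_shiftn r _ (proj2 HA (bits r))).
  - exact (measurable_shiftn r _ (proj2 HB (bits r))).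
  - intros w; apply Hd.
Qed.

Definition premeasure (E : XProd -> Prop) : R :=
  match excluded_middle_informative (cylinder E) with
  | left H => premeasure_at (proj1_sig (constructive_indefinite_description _ H)) E
  | right _ => 0
  end.

Lemma premeasure_cyl N E : cyl N E -> premeasure E = premeasure_at N E.
Proof.
  intro HN. unfold premeasure. destruct (excluded_middle_informative _) as [H|H].
  - destruct (constructive_indefinite_description _ H) as [M HM]. simpl.
    apply premeasure_at_indep; apply cyl_cyl_sections; auto.
  - exfalso; apply H; exists N; auto.
Qed.

Lemma premeasure_nonneg E : 0 <= premeasure E.
Proof.
  unfold premeasure. destruct (excluded_middle_informative _) as [H|H]; [|lra].
  destruct (constructive_indefinite_description _ H) as [M HM]. simpl.
  apply premeasure_at_nonneg, cyl_cyl_sections; auto.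
Qed.

Lemma premeasure_empty : premeasure (fun _ => False) = 0.
Proof.
  rewrite (premeasure_cyl 0 _ cyl_empty). unfold premeasure_at. simpl.
  rewrite (measure_empty genZ (th 0) (th_countably_additive 0)). lra.
Qed.

Lemma premeasure_full : premeasure (fun _ => True) = 1.
Proof.
  rewrite (premeasure_cyl 0) by (intros p q _ _ _; auto). unfold premeasure_at. simpl.
  rewrite (proj1 (proj2 (th_prob 0))). lra.
Qed.

Lemma premeasure_fsum (F : nat -> XProd -> Prop) n :
  (forall i, cylinder (F i)) -> disjoint_family F ->
  premeasure (fun x => exists i, (i < n)%nat /\ F i x) = fsum (fun i => premeasure (F i)) n.
Proof.
  intros H Hd. induction n.
  - rewrite exists_lt_0. apply premeasure_empty.
  - rewrite exists_lt_S. simpl. rewrite <- IHn.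
    destruct (cylinder_first_n F n H) as [N1 H1], (H n) as [N2 H2].
    assert (H1' := cyl_mono N1 (Nat.max N1 N2) _ ltac:(lia) H1).
    assert (H2' := cyl_mono N2 (Nat.max N1 N2) _ ltac:(lia) H2).
    rewrite (premeasure_cyl _ _ (cyl_or N1 N2 _ _ H1 H2)), (premeasure_cyl _ _ H1'),
      (premeasure_cyl _ _ H2').
    apply premeasure_at_or_disjoint; try apply cyl_cyl_sections; auto.
    intros x [i [Hi Hx]] Hn. apply (Hd i n x); auto; lia.
Qed.

Lemma premeasure_sigma_additive (F : nat -> XProd -> Prop) :
  (forall n, cylinder (F n)) -> disjoint_family F -> cylinder (fun x => exists n, F n x) ->
  infinite_sum (fun n => premeasure (F n)) (premeasure (fun x => exists n, F n x)).
Proof.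
  intros HF Hd HU. destruct (cylinder_union_finite F HF HU) as [M HM].
  assert (HU' : (fun x => exists n, F n x) = (fun x => exists i, (i < M)%nat /\ F i x)).
  { apply pred_ext; intro x; split; [apply HM | intros [i [_ H]]; eauto]. }
  rewrite HU', premeasure_fsum by auto.
  apply infinite_sum_eventually_0. intros n Hn.
  replace (F n) with (fun _ : XProd => False); [apply premeasure_empty|].
  apply pred_ext; intro x; split; [tauto | intro H].
  destruct (HM x (ex_intro _ n H)) as [i [Hi Hx]]. apply (Hd i n x); auto; lia.
Qed.

End Premeasure.

Module Caratheodory.
From HB Require Import structures.
From mathcomp Require Import all_boot all_order all_algebra.
From mathcomp Require Import boolp classical_sets functions cardinality reals ereal topology.
From mathcomp Require Import normedtype sequences esum.
From mathcomp Require Import measure_theory.measurable_structure measure_theory.measure_function.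
From mathcomp Require Import measure_theory.measure_extension.
From mathcomp Require Import Rstruct Rstruct_topology.
Import Order.TTheory GRing.Theory Num.Theory.
Local Open Scope classical_set_scope.

Lemma infinite_sum_cvg (s : nat -> R) (l : R) :
  infinite_sum s l <-> ((fun n => (\sum_(0 <= i < n) s i)%R) @ \oo --> l).
Proof.
rewrite /infinite_sum; split.
- move=> H; rewrite (@cvgrPdist_lt _ R^o) => eps /RltP eps0.
  have [N HN] := H eps eps0.
  exists N.+1 => // n /= Hn.
  have := HN n.-1 ltac:(apply/ssrnat.leP; rewrite -ltnS prednK //; exact: leq_ltn_trans Hn).
  rewrite sum_f_R0E prednK; last by exact: leq_ltn_trans Hn.
  by rewrite RdistE distrC => /RltP.
- rewrite (@cvgrPdist_lt _ R^o) => Hc eps /RltP eps0.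
  have [N _ HN] := Hc eps eps0.
  exists N => n /ssrnat.leP Hn.
  have := HN n.+1 ltac:(by rewrite /=; apply: leqW).
  by rewrite sum_f_R0E RdistE distrC => /RltP.
Qed.

Lemma bigcup_exists (F : nat -> set XProd) : \bigcup_n F n = (fun x => exists n, F n x).
Proof. by apply/funext => x; apply/propext; split => [[n _ Fx]|[n Fx]]; exists n. Qed.

Lemma trivIset_disjoint (F : nat -> set XProd) : trivIset setT F <-> disjoint_family F.
Proof.
split => [tF n m x nm Fn Fm|dF n m _ _ [x [Fn Fm]]].
- by apply: nm; apply: (tF n m I I); exists x.
- by case: (eqVneq n m) => // /eqP nm; case: (dF n m x nm Fn Fm).
Qed.

Section Extension.
Variable L : set (set XProd).
Hypothesis L0 : L set0.
Hypothesis LU : setU_closed L.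
Hypothesis LC : setC_closed L.
Variable m0 : set XProd -> R.
Hypothesis m0_ge0 : forall A, Rle 0 (m0 A).
Hypothesis m0_set0 : m0 set0 = 0%R.
Hypothesis m0_sigma_additive : forall F : nat -> XProd -> Prop, (forall n, L (F n)) ->
  disjoint_family F -> L (fun x => exists n, F n x) ->
  infinite_sum (fun n => m0 (F n)) (m0 (fun x => exists n, F n x)).

Definition XT : Type := XProd.
HB.instance Definition _ := gen_eqMixin XT.
HB.instance Definition _ := gen_choiceMixin XT.
HB.instance Definition _ := isPointed.Build XT (fun _ => false, fun _ => false).
HB.instance Definition _ := @isAlgebraOfSets.Build default_measure_display XT L L0 LU LC.

Definition m0E (A : set XT) : \bar R := (m0 A)%:E.

Lemma m0E_set0 : m0E set0 = 0%E.
Proof. by rewrite /m0E m0_set0. Qed.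

Lemma m0E_ge0 A : (0 <= m0E A)%E.
Proof. by rewrite /m0E lee_fin; apply/RleP. Qed.

Lemma m0E_semi_sigma_additive : semi_sigma_additive m0E.
Proof.
move=> F mF tF mU.
have H : (fun n => (\sum_(0 <= i < n) m0 (F i))%R) @ \oo --> m0 (\bigcup_n F n).
  rewrite bigcup_exists; apply/infinite_sum_cvg; apply: m0_sigma_additive => //.
  - exact/trivIset_disjoint.
  - by rewrite -bigcup_exists.
rewrite /m0E (_ : (fun n => _) = (fun n => (\sum_(0 <= i < n) m0 (F i))%:E)); last first.
  by apply/funext => n; rewrite sumEFin.
by apply: cvg_EFin; [apply: nearW | exact: H].
Qed.

HB.instance Definition _ := isMeasure.Build _ XT R m0E m0E_set0 m0E_ge0 m0E_semi_sigma_additive.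

Definition extE := measure_extension m0E.
Definition ext (A : XProd -> Prop) : R := fine (extE A).

Lemma extE_L A : L A -> extE A = m0E A.
Proof. by move=> LA; rewrite /extE /measure_extension measurable_mu_extE. Qed.

Lemma measurable_generated A : Defs.measurable L A ->
  measurable (A : set (g_sigma_algebraType (@measurable _ XT))).
Proof.
elim=> {A}.
- by move=> A LA; apply: sub_sigma_algebra.
- exact: measurableT.
- by move=> A _ mA; apply: measurableC.
- by move=> A _ mA; rewrite -bigcup_exists; apply: bigcupT_measurable.
Qed.

Lemma extE_fin A : Defs.measurable L A -> extE A = (ext A)%:E.
Proof.
move=> mA; rewrite /ext fineK // ge0_fin_numE ?measure_ge0 //.
apply: (le_lt_trans (y := extE setT)).
  by apply: le_measure; rewrite ?inE //; exact: measurable_generated.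
have LT : L setT by rewrite -setC0; exact: LC L0.
by rewrite extE_L // /m0E ltey.
Qed.

Lemma ext_countably_additive : countably_additive L ext.
Proof.
split=> [A mA|F mF dF].
  by apply/RleP; rewrite -lee_fin -extE_fin //; exact: measure_ge0.
apply/infinite_sum_cvg.
have mU : Defs.measurable L (fun x => exists n, F n x) by constructor.
have := @measure_sigma_additive _ _ _ extE
  (F : nat -> set (g_sigma_algebraType (@measurable _ XT))).
move=> /(_ (fun n => measurable_generated _ (mF n))) /(_ (proj2 (trivIset_disjoint F) dF)).
rewrite bigcup_exists => H0.
have : (fun n => \sum_(0 <= i < n) extE (F i))%R @ \oo --> extE (fun x => exists n, F n x).
  exact: H0.
rewrite (extE_fin _ mU).
rewrite (_ : (fun n => _) = (fun n => (\sum_(0 <= i < n) ext (F i))%:E)); last first.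
  by apply/funext => n; rewrite -sumEFin; apply: eq_bigr => i _; rewrite extE_fin.
by move=> /fine_cvg.
Qed.

End Extension.

Lemma caratheodory_extension (L : (XProd -> Prop) -> Prop) (m0 : (XProd -> Prop) -> R) :
  L (fun _ => False) ->
  (forall A B, L A -> L B -> L (fun x => A x \/ B x)) ->
  (forall A, L A -> L (fun x => ~ A x)) ->
  (forall A, Rle 0 (m0 A)) -> m0 (fun _ => False) = 0%R ->
  (forall F : nat -> XProd -> Prop, (forall n, L (F n)) -> disjoint_family F ->
    L (fun x => exists n, F n x) ->
    infinite_sum (fun n => m0 (F n)) (m0 (fun x => exists n, F n x))) ->
  exists nu, (forall A, L A -> nu A = m0 A) /\ countably_additive L nu.
Proof.
move=> L0 LU LC m0_ge0 m0_set0 m0_sa.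
exists (@ext L L0 LU LC m0 m0_ge0 m0_set0 m0_sa); split.
- by move=> A LA; rewrite /ext extE_L.
- exact: ext_countably_additive.
Qed.

End Caratheodory.

Section TransportCountablyAdditive.
Context {X Y : Type} (genX : (X -> Prop) -> Prop) (genY : (Y -> Prop) -> Prop).

Lemma countably_additive_sub_gen (gen : (X -> Prop) -> Prop) (mu : (X -> Prop) -> R) :
  (forall G, gen G -> measurable genX G) ->
  countably_additive genX mu -> countably_additive gen mu.
Proof.
  intros Hgen [Hpos Hadd]. split.
  - intros A HA. apply Hpos, (measurable_sub_gen gen); auto.
  - intros F HF Hd. apply Hadd; auto. intro n; apply (measurable_sub_gen gen); auto.
Qed.

Lemma countably_additive_preimage (mu : (X -> Prop) -> R) (f : X -> Y) :
  (forall B, measurable genY B -> measurable genX (fun x => B (f x))) ->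
  countably_additive genX mu -> countably_additive genY (fun B => mu (fun x => B (f x))).
Proof.
  intros Hf [Hpos Hadd]. split.
  - intros A HA. apply Hpos, Hf; auto.
  - intros F HF Hd. apply (Hadd (fun n x => F n (f x))); auto.
    intros n m x Hnm H1 H2; eapply Hd; eauto.
Qed.

Lemma countably_additive_and (mu : (X -> Prop) -> R) P : measurable genX P ->
  countably_additive genX mu -> countably_additive genX (fun B => mu (fun x => B x /\ P x)).
Proof.
  intros HP [Hpos Hadd]. split.
  - intros A HA. apply Hpos, measurable_and; auto.
  - intros F HF Hd.
    replace (fun x => (exists n, F n x) /\ P x) with (fun x => exists n, F n x /\ P x)
      by (apply pred_ext; intro x; firstorder).
    apply (Hadd (fun n x => F n x /\ P x)).
    + intro n. apply measurable_and; auto.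
    + intros n m x Hnm [H1 _] [H2 _]; eapply Hd; eauto.
Qed.

Lemma countably_additive_scal (mu : (X -> Prop) -> R) c : 0 <= c ->
  countably_additive genX mu -> countably_additive genX (fun B => c * mu B).
Proof.
  intros Hc [Hpos Hadd]. split.
  - intros A HA. apply Rmult_le_pos; auto.
  - intros F HF Hd. apply infinite_sum_scal, Hadd; auto.
Qed.

End TransportCountablyAdditive.

Lemma cylinder_extension_exists (th : nat -> (bseqZ -> Prop) -> R) :
  (forall k, is_prob_measure genZ (th k)) -> theta_relations th ->
  exists nu, (forall A, cylinder A -> nu A = premeasure th A) /\
             countably_additive genProd nu.
Proof.
  intros th_prob th_rel.
  destruct (Caratheodory.caratheodory_extension cylinder (premeasure th))
    as [nu [Hext Hca]].
  - exists 0%nat. apply cyl_empty.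
  - intros A B [N HA] [M HB]. exists (Nat.max N M). apply cyl_or; auto.
  - intros A [N HA]. exists N. apply cyl_not; auto.
  - intro A. apply premeasure_nonneg; auto.
  - apply premeasure_empty; auto.
  - intros F HF Hd HU. apply premeasure_sigma_additive; auto.
  - exists nu. split; auto.
    apply countably_additive_sub_gen with cylinder; auto.
    intros G HG. apply meas_gen, genProd_cylinder; auto.
Qed.

Lemma succ_mod_eq x r m : (x < m)%nat -> (r < m)%nat ->
  ((x + 1) mod m = r <-> x = (r + m - 1) mod m)%nat.
Proof.
  intros Hx Hr.
  assert (Hx1 : ((x + 1) mod m = if (x + 1 =? m)%nat then 0 else x + 1)%nat).
  { destruct (Nat.eqb_spec (x + 1) m) as [<-|ne]; [apply Nat.Div0.mod_same|].
    apply Nat.mod_small; lia. }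
  assert (Hr1 : ((r + m - 1) mod m = if (r =? 0)%nat then m - 1 else r - 1)%nat).
  { destruct (Nat.eqb_spec r 0) as [->|ne]; [apply Nat.mod_small; lia|].
    replace (r + m - 1)%nat with ((r - 1) + 1 * m)%nat by lia.
    rewrite Nat.Div0.mod_add. apply Nat.mod_small; lia. }
  rewrite Hx1, Hr1.
  destruct (Nat.eqb_spec (x + 1) m), (Nat.eqb_spec r 0); lia.
Qed.

Section Existence.
Variable th : nat -> (bseqZ -> Prop) -> R.
Hypothesis th_prob : forall k, is_prob_measure genZ (th k).
Hypothesis th_rel : theta_relations th.
Variable nu : (XProd -> Prop) -> R.
Hypothesis nu_cylinder : forall A, cylinder A -> nu A = premeasure th A.
Hypothesis nu_ca : countably_additive genProd nu.

Lemma th_shift_mod k n B : measurable genZ B ->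
  th k (fun w => B (shiftn n w)) = th k (fun w => B (shiftn (n mod 2 ^ k) w)).
Proof.
  intro HB.
  assert (Hper : forall q m, th k (fun w => B (shiftn (m + 2 ^ k * q) w)) =
                             th k (fun w => B (shiftn m w))).
  { induction q; intro m; [rewrite Nat.mul_0_r, Nat.add_0_r; reflexivity|].
    rewrite <- (IHq m), <- (proj1 (th_rel k) (fun w => B (shiftn (m + 2 ^ k * q) w))
                                 (measurable_shiftn _ _ HB)).
    unfold shift_meas, pushforward. f_equal. apply pred_ext; intro w.
    rewrite shiftn_add, Nat.mul_succ_r, Nat.add_assoc. tauto. }
  rewrite <- (Hper (n / 2 ^ k) (n mod 2 ^ k))%nat.
  assert (Hn := Nat.div_mod_eq n (2 ^ k)).
  rewrite Nat.add_comm, <- Hn. reflexivity.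
Qed.

Lemma extension_rect_cylZ B N k r : cylZ N B -> (r < 2 ^ k)%nat ->
  nu (fun p => B (fst p) /\ A_rk r k (snd p)) = / 2 ^ k * th k (fun w => B (shiftn r w)).
Proof.
  intros HB Hr.
  set (E := fun p : XProd => B (fst p) /\ A_rk r k (snd p)).
  assert (HE : cyl (Nat.max N k) E).
  { intros p q H1 H2 [Hp1 Hp2]. split.
    - apply (HB (fst p)); auto; intros z Hz; apply H1; lia.
    - apply (A_rk_cylN r k (snd p)); auto; intros i Hi; apply H2; lia. }
  assert (HsE : cyl_sections k E).
  { split.
    - intros w a a' Ha [H1 H2]; split; auto. apply (A_rk_cylN r k a a'); auto.
    - intro a. apply measurable_and;
        [apply cylZ_measurable with N; auto | apply (measurable_const genZ (A_rk r k a))]. }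
  rewrite (nu_cylinder E) by (exists (Nat.max N k); auto).
  rewrite (premeasure_cyl th th_rel _ E HE),
    (premeasure_at_indep th th_rel _ _ E (cyl_cyl_sections _ _ HE) HsE).
  unfold premeasure_at. rewrite (fsum_single _ (2 ^ k) r Hr).
  - f_equal. f_equal. apply pred_ext; intro w. unfold E; cbn [fst snd].
    rewrite A_rk_bits by auto. tauto.
  - intros i Hi Hne. replace (fun w => E (shiftn i w, bits i)) with (fun _ : bseqZ => False).
    + rewrite (measure_empty genZ (th k) (th_countably_additive th th_prob k)). ring.
    + apply pred_ext; intro w; unfold E; cbn [fst snd]. rewrite A_rk_bits by auto. intuition congruence.
Qed.

Lemma extension_rect B k r : measurable genZ B -> (r < 2 ^ k)%nat ->
  nu (fun p => B (fst p) /\ A_rk r k (snd p)) = / 2 ^ k * th k (fun w => B (shiftn r w)).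
Proof.
  intros HB Hr. revert B HB.
  apply (pi_lambda genZ (fun B => exists N, cylZ N B)
           (fun B => nu (fun p => B (fst p) /\ A_rk r k (snd p)))
           (fun B => / 2 ^ k * th k (fun w => B (shiftn r w)))).
  - apply (countably_additive_preimage genProd genZ
             (fun C => nu (fun p => C p /\ A_rk r k (snd p))) fst measurable_fst).
    apply countably_additive_and; auto. apply measurable_A_rk.
  - apply countably_additive_scal; [left; apply Rinv_0_lt_compat, pow2_pos|].
    apply (countably_additive_preimage genZ genZ _ (shiftn r) (measurable_shiftn r)).
    apply th_countably_additive; auto.
  - intros A B [N HA] [M HB]. exists (Nat.max N M). intros w w' Hw [H1 H2].
    split; [apply (HA w) | apply (HB w)]; auto; intros z Hz; apply Hw; lia.
  - intros A [N HA]. apply cylZ_measurable with N; auto.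
  - intros G HG. apply meas_gen, genZ_cylZ; auto.
  - apply (extension_rect_cylZ (fun _ => True) 0%nat); auto. intros w w' _ _; auto.
  - intros A [N HA]. apply (extension_rect_cylZ A N); auto.
Qed.

Lemma extension_invariant : meas_eq genProd (pushforward SxO nu) nu.
Proof.
  apply meas_eq_of_rectangles; auto.
  - apply (countably_additive_preimage genProd genProd _ SxO measurable_SxO); auto.
  - intros B k r HB Hr. unfold pushforward.
    set (r' := ((r + 2 ^ k - 1) mod 2 ^ k)%nat).
    assert (Hr' : (r' < 2 ^ k)%nat) by apply Nat.mod_upper_bound, pow2_neq0.
    transitivity (nu (fun p => (fun w => B (shiftn 1 w)) (fst p) /\ A_rk r' k (snd p))).
    { f_equal. apply pred_ext; intro p. unfold SxO, A_rk, Defs.shift. cbn [fst snd].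
      rewrite odometer_bin_val, (succ_mod_eq _ _ _ (bin_val_lt (snd p) k) Hr). tauto. }
    rewrite (extension_rect (fun w => B (shiftn 1 w)) k r') by (auto; apply measurable_shiftn; auto).
    rewrite (extension_rect B k r) by auto. f_equal.
    transitivity (th k (fun w => B (shiftn (1 + r') w))).
    { f_equal. apply pred_ext; intro w. rewrite shiftn_add. tauto. }
    rewrite (th_shift_mod k (1 + r')), (th_shift_mod k r) by auto.
    unfold r'. rewrite Nat.Div0.add_mod_idemp_r.
    replace (1 + (r + 2 ^ k - 1))%nat with (r + 1 * 2 ^ k)%nat by (assert (H := pow2_neq0 k); lia).
    rewrite Nat.Div0.mod_add. reflexivity.
Qed.

Lemma extension_theta k : meas_eq genZ (theta k nu) (th k).
Proof.
  intros B HB. unfold theta, P_rk.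
  assert (Hk : (0 < 2 ^ k)%nat) by apply Nat.neq_0_lt_0, pow2_neq0.
  assert (Hmass : nu (fun p : XProd => A_rk 0 k (snd p)) = / 2 ^ k).
  { transitivity (nu (fun p => (fun _ : bseqZ => True) (fst p) /\ A_rk 0 k (snd p))).
    { f_equal. apply pred_ext; tauto. }
    rewrite (extension_rect (fun _ => True) k 0) by (auto; apply meas_full).
    rewrite (proj1 (proj2 (th_prob k))). ring. }
  rewrite Hmass, (extension_rect B k 0) by auto.
  replace (fun w => B (shiftn 0 w)) with B by (apply pred_ext; intro; rewrite shiftn_0; tauto).
  assert (Hp := pow2_pos k). field. lra.
Qed.

Lemma extension_inM : inM nu.
Proof.
  split; [|apply extension_invariant].
  split; [apply nu_ca|]. split; [|apply nu_ca].
  rewrite nu_cylinder by (exists 0%nat; intros p q _ _ _; auto).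
  apply premeasure_full; auto.
Qed.

End Existence.

Theorem corollary1 :
  (forall nu, inM nu -> theta_relations (fun k => theta k nu)) /\
  (forall nu nu', inM nu -> inM nu' ->
     (forall k, meas_eq genZ (theta k nu) (theta k nu')) ->
     (forall k r, (r < 2 ^ k)%nat -> meas_eq genZ (P_rk r k nu) (P_rk r k nu')) /\
     meas_eq genProd nu nu') /\
  (forall th : nat -> (bseqZ -> Prop) -> R,
     (forall k, is_prob_measure genZ (th k)) ->
     theta_relations th ->
     exists nu, inM nu /\ (forall k, meas_eq genZ (theta k nu) (th k)) /\
       (forall nu', inM nu' -> (forall k, meas_eq genZ (theta k nu') (th k)) ->
          meas_eq genProd nu' nu)).
Proof.
  split; [|split].
  - intros nu Hnu k. split; [apply inM_theta_shift_invariant | apply inM_theta_average]; auto.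
  - apply theta_determines.
  - intros th th_prob th_rel.
    destruct (cylinder_extension_exists th th_prob th_rel) as [nu [Hcyl Hca]].
    assert (Hnu := extension_inM th th_prob th_rel nu Hcyl Hca).
    assert (Hth := extension_theta th th_prob th_rel nu Hcyl Hca).
    exists nu. split; [|split]; auto.
    intros nu' Hnu' Hth'. apply (theta_determines nu' nu Hnu' Hnu).
    intros k B HB. rewrite Hth', Hth; auto.
Qed.
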